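(* Let $G$ be a finite abstract simplicial complex with connection matrix $L$ and $g=L^{-1}$. Then for all $x,y\in G$, $$g(x,y)=\omega(x)\,\omega(y)\,\chi\big(W^+(x)\cap W^+(y)\big).$$
   Context: A finite abstract simplicial complex $G$ is a finite set of non-empty finite sets closed under taking non-empty subsets; its elements are simplices. For $x\in G$, $\omega(x)=(-1)^{|x|-1}$. The connection matrix $L$ has $L(x,y)=1$ if $x\cap y\neq\emptyset$ and $0$ otherwise. The star of $x$ is $W^+(x)=\{y\in G: x\subseteq y\}$. For any subset $A\subseteq G$ (not necessarily a complex), $\chi(A)=\sum_{y\in A}\omega(y)$. *)

From mathcomp Require Import all_boot all_order all_algebra.
Set Implicit Arguments. Unset Strict Implicit. Unset Printing Implicit Defensive.
Import GRing.Theory Num.Theory.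
Local Open Scope ring_scope.

Section Defs.
Variable V : finType.

Definition is_simplicial_complex (G : {set {set V}}) : Prop :=
  set0 \notin G /\
  forall x y : {set V}, x \in G -> y \subset x -> y != set0 -> y \in G.

Definition omega (x : {set V}) : int := (-1) ^+ (#|x|.-1).

Definition chi (A : {set {set V}}) : int := \sum_(y in A) omega y.

Definition star (G : {set {set V}}) (x : {set V}) : {set {set V}} :=
  [set y in G | x \subset y].

Definition connection_matrix (G : {set {set V}}) : 'M[int]_#|G| :=
  \matrix_(i < #|G|, j < #|G|)
    ((enum_val i :&: enum_val j != set0 :> {set V})%:R : int).

Definition green_formula (G : {set {set V}}) : 'M[int]_#|G| :=
  \matrix_(i < #|G|, j < #|G|)
    (omega (enum_val i) * omega (enum_val j)
       * chi (star G (enum_val i) :&: star G (enum_val j))).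
End Defs.

(* Expanding chi(W+(y) :&: W+(z)) as a sum over the common cofaces w and
   exchanging sums, (L g)(x, z) = omega z * sum_(w >= z) omega w * S(w), where
   S(w) = sum_(y <= w, y :&: x != set0) omega y.  Since the alternating sum
   over all subsets of a non-empty set vanishes, S(w) = [w \subset x].  What
   is left is omega z * sum_(z <= w <= x) omega w, and the alternating sum
   over an interval of the Boolean lattice is nonzero only when z = x.
   Closure of G under non-empty subsets lets all these y and w range over
   the whole Boolean lattice instead of G. *)

From mathcomp Require Import all_boot all_order all_algebra.
Set Implicit Arguments. Unset Strict Implicit. Unset Printing Implicit Defensive.
Import GRing.Theory.
Local Open Scope ring_scope.

Section BooleanLattice.
Variables (R : pzRingType) (V : finType).

Lemma subset_setU1_notin (a : V) (z w : {set V}) :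
  a \notin z -> (z \subset a |: w) = (z \subset w).
Proof.
move=> za; apply/subsetP/subsetP => zw y zy; have := zw y zy; rewrite !inE.
  by case/orP=> // /eqP ya; rewrite -ya zy in za.
by move=> ->; rewrite orbT.
Qed.

Lemma sum_sign_interval_eq0 (z x : {set V}) (a : V) :
  a \in x -> a \notin z ->
  \sum_(w : {set V} | (z \subset w) && (w \subset x)) (-1) ^+ #|w| = 0 :> R.
Proof.
(* w |-> a |: w matches the terms not containing a with those containing a. *)
move=> xa za; rewrite (bigID (fun w : {set V} => a \in w)) /=.
rewrite (reindex_onto (fun w : {set V} => a |: w) (fun w => w :\ a)) /=; last first.
  by move=> w /andP[_ aw]; rewrite setD1K.
rewrite (eq_bigl (fun w : {set V} => (z \subset w) && (w \subset x) && (a \notin w))).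
  rewrite -big_split big1 // => w /andP[_ aw].
  by rewrite /= cardsU1 aw exprS mulN1r addNr.
move=> w; rewrite subset_setU1_notin // subUset sub1set xa setU11 /= andbT.
case: (boolP (a \in w)) => aw; last by rewrite setU1K // eqxx andbT.
suff -> : ((a |: w) :\ a == w) = false by rewrite !andbF.
by apply/negbTE/eqP => /setP /(_ a); rewrite !inE eqxx aw.
Qed.

Lemma sum_sign_interval (z x : {set V}) :
  \sum_(w : {set V} | (z \subset w) && (w \subset x)) (-1) ^+ #|w|
    = (z == x)%:R * (-1) ^+ #|x| :> R.
Proof.
have [<-|neq_zx] := eqVneq z x.
  rewrite mul1r (big_pred1 z) // => w /=.
  by rewrite eq_sym eqEsubset andbC.
rewrite mul0r; have [sub_zx|] := boolP (z \subset x).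
  have /subsetPn[a xa za] : ~~ (x \subset z).
    by apply: contra neq_zx => sub_xz; rewrite eqEsubset sub_zx.
  exact: sum_sign_interval_eq0 xa za.
move=> not_sub_zx; rewrite big_pred0 // => w.
by apply: contraNF not_sub_zx => /andP[/subset_trans]; apply.
Qed.

Lemma sum_sign_subset (x : {set V}) :
  \sum_(w : {set V} | w \subset x) (-1) ^+ #|w| = (x == set0)%:R :> R.
Proof.
rewrite (eq_bigl (fun w : {set V} => (set0 \subset w) && (w \subset x))); last first.
  by move=> w; rewrite sub0set.
by rewrite sum_sign_interval eq_sym; case: eqP => [->|_]; rewrite ?cards0 ?mulr1 ?mul0r.
Qed.
End BooleanLattice.

Section Omega.
Variable V : finType.
Implicit Types x y z w : {set V}.

Lemma omegaE y : y != set0 -> omega y = - (-1) ^+ #|y|.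
Proof. by rewrite -card_gt0 /omega; case: #|y| => // n _; rewrite exprS mulN1r opprK. Qed.

Lemma mul_omega_self x : omega x * omega x = 1.
Proof. by rewrite -expr2 sqrr_sign. Qed.

Lemma sum_omega_interval z x : z != set0 ->
  \sum_(w : {set V} | (z \subset w) && (w \subset x)) omega w = (z == x)%:R * omega x.
Proof.
move=> z_neq0; have w_neq0 w : z \subset w -> w != set0.
  by apply: contraTneq => ->; rewrite subset0.
rewrite (eq_bigr (fun w => - (-1) ^+ #|w|)) => [|w /andP[/w_neq0/omegaE //]].
rewrite sumrN sum_sign_interval; have [<-|_] := eqVneq z x.
  by rewrite !mul1r omegaE.
by rewrite !mul0r oppr0.
Qed.

Lemma sum_omega_meet x w : w != set0 ->
  \sum_(y : {set V} | (y \subset w) && (x :&: y != set0)) omega y = (w \subset x)%:R.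
Proof.
move=> w_neq0; have y_neq0 y : x :&: y != set0 -> y != set0.
  by apply: contraNneq => ->; rewrite setI0.
rewrite (eq_bigr (fun y => - (-1) ^+ #|y|)) => [|y /andP[_ /y_neq0/omegaE //]].
have := sum_sign_subset int w; rewrite (negbTE w_neq0) mulr0n.
rewrite (bigID (fun y => x :&: y == set0)) /=.
rewrite (eq_bigl (fun y => y \subset w :\: x)) => [|y]; last first.
  by rewrite subsetD setI_eq0 disjoint_sym.
rewrite sum_sign_subset setD_eq0 sumrN => /eqP.
by rewrite addr_eq0 => /eqP ->.
Qed.
End Omega.

Section ConnectionGreen.
Variables (V : finType) (G : {set {set V}}).
Hypothesis G_complex : is_simplicial_complex G.

Lemma simplex_neq0 (x : {set V}) : x \in G -> x != set0.
Proof. by case: G_complex => G0 _; apply: contraTneq => ->. Qed.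

Lemma face_in_complex (x y : {set V}) : x \in G -> y \subset x -> y != set0 -> y \in G.
Proof. by case: G_complex => _; apply. Qed.

Lemma connection_green_entry (x z : {set V}) : x \in G -> z \in G ->
  \sum_(y in G) (x :&: y != set0)%:R * (omega y * omega z * chi (star G y :&: star G z))
    = (x == z)%:R.
Proof.
move=> xG zG; under eq_bigr do rewrite mulr_natl mulrb.
rewrite -big_mkcondr /=.
under eq_bigr do rewrite /chi mulr_sumr.
rewrite (exchange_big_dep (mem (star G z))) /=; last by move=> y w _; rewrite inE => /andP[].
transitivity (\sum_(w in star G z) (w \subset x)%:R * (omega z * omega w)).
  apply: eq_bigr => w; rewrite inE => /andP[wG zw].
  rewrite -!mulr_suml -sum_omega_meet ?simplex_neq0 // mulrA; congr (_ * _ * _).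
  apply: eq_bigl => y; rewrite !inE wG zw !andbT andbC.
  have [yw|] //= := boolP (y \subset w); apply/andP/idP => [[]//|xy]; split=> //.
  by apply: face_in_complex wG yw _; apply: contraNneq xy => ->; rewrite setI0.
under eq_bigr do rewrite mulr_natl mulrb.
rewrite -big_mkcondr /= (eq_bigl (fun w : {set V} => (z \subset w) && (w \subset x))) => [|w].
  rewrite -mulr_sumr sum_omega_interval ?simplex_neq0 // eq_sym.
  by have [->|_] := eqVneq z x; rewrite ?mul1r ?mul_omega_self ?mul0r ?mulr0.
rewrite inE -andbA; have [zw|_] /= := boolP (z \subset w); last by rewrite andbF.
have [wx|_] := boolP (w \subset x); last by rewrite andbF.
rewrite andbT; apply: face_in_complex xG wx _.
by apply: contraTneq zw => ->; rewrite subset0 simplex_neq0.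
Qed.

Lemma mul_connection_green : connection_matrix G *m green_formula G = 1%:M.
Proof.
apply/matrixP => i k; rewrite !mxE; under eq_bigr do rewrite !mxE.
rewrite -(big_enum_val (fun y => (enum_val i :&: y != set0)%:R *
  (omega y * omega (enum_val k) * chi (star G y :&: star G (enum_val k))))).
by rewrite connection_green_entry ?enum_valP // (inj_eq enum_val_inj).
Qed.
End ConnectionGreen.

Theorem theorem4 (V : finType) (G : {set {set V}}) :
  is_simplicial_complex G ->
  connection_matrix G \in unitmx /\
  invmx (connection_matrix G) = green_formula G.
Proof.
move=> G_complex; have LM := mul_connection_green G_complex.
have [L_unit _] := mulmx1_unit LM.
by split=> //; rewrite -(mulKmx L_unit (green_formula G)) LM mulmx1.
Qed.
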